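(* Let $n\ge1$, let $\gamma,\beta$ be proper $3$-colorings of the $2\times n$ grid graph $M^*_{2,n}$, let $H$ be an integer, and set $y_{i,j}=H+h_{\gamma,v_{1,1}}(\beta,v_{i,j})$ for $i\in\{1,2\}$, $1\le j\le n$. When the multiset $Y=\{y_{i,j}\}$ is listed from lowest to highest, any two consecutive values differ by $0$ or $2$.
   Context: $M^*_{2,n}$ is the grid graph with vertices $v_{i,j}$ ($i\in\{1,2\}$, $1\le j\le n$), $v_{i,j}$ adjacent to $v_{i,j\pm1}$ and $v_{3-i,j}$. Colors lie in $\mathbb{Z}_3$. For a proper $3$-coloring $\gamma$ and an edge traversed from $a$ to $b$, its weight $w(\gamma,\overrightarrow{ab})\in\{1,-1\}$ is congruent to $\gamma(b)-\gamma(a)$ mod $3$; the weight $w(\gamma,P)$ of a directed path is the sum of its edge weights. For any proper $3$-coloring the weight of a directed path from $u$ to $v$ depends only on $u,v$. The relative height is $h_{\gamma,u}(\beta,v)=w(\beta,P_{u,v})-w(\gamma,P_{u,v})$ for any directed path $P_{u,v}$ from $u$ to $v$. *)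

From mathcomp Require Import all_boot all_order all_algebra.
Set Implicit Arguments. Unset Strict Implicit. Unset Printing Implicit Defensive.
Import Order.TTheory GRing.Theory Num.Theory.
Local Open Scope ring_scope.

(* Vertices of M*_{2,n}: v_{i,j} is (i-1, j-1) : 'I_2 * 'I_n (0-based). *)
Notation gvert n := ('I_2 * 'I_n)%type.

Definition gadj (n : nat) (a b : gvert n) : bool :=
  ((a.1 == b.1) && (((a.2 : nat) == (b.2 : nat).+1) || ((b.2 : nat) == (a.2 : nat).+1)))
  || ((a.1 != b.1) && (a.2 == b.2)).

Definition coloring (n : nat) := gvert n -> 'Z_3.

Definition proper3 (n : nat) (c : coloring n) : Prop :=
  forall a b : gvert n, gadj a b -> c a != c b.

(* weight of the directed edge a -> b: the element of {1,-1} congruent to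
   c(b) - c(a) mod 3 (for a proper coloring this difference is 1 or 2 = -1). *)
Definition eweight (n : nat) (c : coloring n) (a b : gvert n) : int :=
  if c b - c a == 1 then 1 else -1.

Definition pweight (n : nat) (c : coloring n) (p : seq (gvert n)) : int :=
  \sum_(e <- zip p (behead p)) eweight c e.1 e.2.

(* a specific directed path from v_{1,1} to v = v_{i,j}: along the first row
   from column 1 to column j, then (if i = 2) down to v_{2,j}. *)
Definition cpath (n : nat) (v : gvert n) : seq (gvert n) :=
  map (fun k : 'I_n => (ord0 : 'I_2, k))
      (filter (fun k : 'I_n => (k <= v.2)%N) (enum 'I_n))
  ++ (if v.1 == ord0 then [::] else [:: v]).

Definition relheight (n : nat) (gamma beta : coloring n) (v : gvert n) : int :=
  pweight beta (cpath v) - pweight gamma (cpath v).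

From mathcomp Require Import all_boot all_order all_algebra.
From mathcomp Require Import zify lra.
Set Implicit Arguments. Unset Strict Implicit. Unset Printing Implicit Defensive.
Import Order.TTheory GRing.Theory Num.Theory.
Local Open Scope ring_scope.

(* The canonical paths [cpath] form a comb rooted at v_{1,1}: the first row
   together with one vertical edge per column.  The path to each vertex
   extends the path to its comb predecessor by a single edge, so the relative
   heights of the two differ by a difference of two weights in {1,-1}, i.e. by
   -2, 0 or 2.  Hence all relative heights are even, and since the comb is
   connected the sorted heights cannot jump over a gap a < b with b - a > 2:
   the vertices of height at most a would form a nonempty proper set closed
   under comb steps. *)

Lemma sort_lipschitz_gap (R : realDomainType) (T : finType) (e : rel T) (x0 : T)
    (f : T -> R) (d : R) (Y := sort <=%R [seq f v | v <- enum T]) :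
  0 <= d -> (forall x, connect e x0 x) ->
  (forall u w, e u w -> `|f w - f u| <= d) ->
  forall k, (k.+1 < size Y)%N -> nth 0 Y k.+1 - nth 0 Y k <= d.
Proof.
move=> d_ge0 connect_root f_lipschitz k ltk1Y.
have sortedY : sorted <=%R Y by apply/sort_sorted/le_total.
have memY x : (x \in Y) = (x \in [seq f v | v <- enum T]).
  by rewrite /Y mem_sort.
set a := nth 0 Y k; set b := nth 0 Y k.+1.
have le_nth i j : (i <= j)%N -> (j < size Y)%N -> nth 0 Y i <= nth 0 Y j.
  move=> le_ij ltjY; apply: (sorted_leq_nth le_trans lexx) => //.
  by rewrite inE (leq_ltn_trans le_ij).
have low_or_high v : (f v <= a) || (b <= f v).
  have Yv : f v \in Y by rewrite memY map_f ?mem_enum.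
  have ltvY := Yv; rewrite -index_mem in ltvY.
  rewrite -(nth_index 0 Yv); case: (leqP (index (f v) Y) k) => [le_vk|lt_kv].
    by rewrite le_nth // (leq_trans _ ltk1Y).
  by rewrite orbC le_nth.
have /mapP[va _ Yva] : a \in [seq f v | v <- enum T].
  by rewrite -memY mem_nth // ltnW.
have /mapP[vb _ Yvb] : b \in [seq f v | v <- enum T] by rewrite -memY mem_nth.
have [//|gap] := lerP (b - a) d; exfalso.
have lt_ab : a < b by lra.
have low_closed : closed e [pred v | f v <= a].
  move=> u w /f_lipschitz; rewrite ler_norml !inE => /andP[lo hi].
  move: (low_or_high u) (low_or_high w).
  by case: (lerP (f u) a) => hu; case: (lerP (f w) a) => hw //= hbu hbw;
    exfalso; lra.
have := closed_connect low_closed (connect_root va).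
have := closed_connect low_closed (connect_root vb).
by rewrite !inE -Yva -Yvb lexx (lt_geF lt_ab) => ->.
Qed.

Section CanonicalPaths.

Variable n : nat.
Implicit Types (c : coloring n) (u w : gvert n).

Lemma pweight_cons2 c x y s :
  pweight c [:: x, y & s] = eweight c x y + pweight c (y :: s).
Proof. by rewrite /pweight /= big_cons. Qed.

Lemma pweight_rcons2 c s x y :
  pweight c (rcons (rcons s x) y) = pweight c (rcons s x) + eweight c x y.
Proof.
have pweight_rcons z t :
    pweight c (rcons (z :: t) y) = pweight c (z :: t) + eweight c (last z t) y.
  elim: t z => [|z' t IHt] z.
    by rewrite pweight_cons2 /pweight /= !big_nil addr0 add0r.
  by rewrite !rcons_cons !pweight_cons2 IHt addrA.
case: s => [|z s]; first exact: pweight_rcons.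
by rewrite rcons_cons pweight_rcons last_rcons.
Qed.

Lemma filter_enum_ord_leq (j : 'I_n) :
  [seq k : 'I_n <- enum 'I_n | (k <= j)%N] =
  rcons [seq k : 'I_n <- enum 'I_n | (k < j)%N] j.
Proof.
have val_filter (p : pred nat) :
    map val [seq k : 'I_n <- enum 'I_n | p k] = filter p (iota 0 n).
  by rewrite -val_enum_ord filter_map.
apply: (inj_map val_inj).
rewrite map_rcons (val_filter (fun k => k <= j)%N) (val_filter (fun k => k < j)%N).
rewrite (filter_iota_leq 0 (ltn_ord j)) (filter_iota_ltn 0 (ltnW (ltn_ord j))).
by rewrite -cats1 -addn1 iotaD.
Qed.

Lemma cpath_row (j : 'I_n) :
  cpath (ord0, j) = [seq (ord0, k) | k : 'I_n <- enum 'I_n & (k <= j)%N].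
Proof. by rewrite /cpath eqxx cats0. Qed.

Lemma cpath_rcons u : exists p, cpath u = rcons p u.
Proof.
case: u => i j; rewrite /cpath /=.
case: eqP => [->|_]; last by rewrite cats1; eexists.
by rewrite cats0 filter_enum_ord_leq map_rcons; eexists.
Qed.

Definition cpath_step u w : bool := cpath w == rcons (cpath u) w.

Lemma cpath_step_right (j j' : 'I_n) :
  j' = j.+1 :> nat -> cpath_step (ord0, j) (ord0, j').
Proof.
move=> def_j'; apply/eqP; rewrite !cpath_row filter_enum_ord_leq map_rcons.
by congr (rcons (map _ _) _); apply: eq_filter => k; rewrite def_j' ltnS.
Qed.

Lemma cpath_step_down i (j : 'I_n) : i != ord0 -> cpath_step (ord0, j) (i, j).
Proof.
by move=> i_neq0; apply/eqP; rewrite cpath_row /cpath /= (negbTE i_neq0) cats1.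
Qed.

Lemma eweight_sign c a b : eweight c a b = 1 \/ eweight c a b = -1.
Proof. by rewrite /eweight; case: ifP; [left | right]. Qed.

Variables gamma beta : coloring n.

Lemma relheight_step u w : cpath_step u w ->
  relheight gamma beta w - relheight gamma beta u =
  eweight beta u w - eweight gamma u w.
Proof.
move=> /eqP cpath_w; have [p cpath_u] := cpath_rcons u.
by rewrite /relheight cpath_w cpath_u !pweight_rcons2; lia.
Qed.

Lemma relheight_step_norm u w : cpath_step u w ->
  `|relheight gamma beta w - relheight gamma beta u| <= 2.
Proof.
move/relheight_step=> ->.
by case: (eweight_sign beta u w) (eweight_sign gamma u w) => -> [] ->.
Qed.

Lemma relheight_step_even u w : cpath_step u w ->
  (2 %| relheight gamma beta w - relheight gamma beta u)%Z.
Proof.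
move/relheight_step=> ->.
by case: (eweight_sign beta u w) (eweight_sign gamma u w) => -> [] ->.
Qed.

End CanonicalPaths.

Lemma connect_cpath_step m (v : gvert m.+1) :
  connect (@cpath_step m.+1) (ord0, ord0) v.
Proof.
have connect_row k : (k < m.+1)%N ->
    connect (@cpath_step m.+1) (ord0, ord0) (ord0, inord k).
  elim: k => [|k IHk] lt_k; first by rewrite (inord_val (ord0 : 'I_m.+1)).
  apply: connect_trans (IHk (ltnW lt_k)) (connect1 _).
  by apply: cpath_step_right; rewrite !inordK // ltnW.
case: v => i j; rewrite -[j]inord_val.
have [->|i_neq0] := eqVneq i ord0; first exact: connect_row.
apply: connect_trans (connect_row _ (ltn_ord j)) (connect1 _).
exact: cpath_step_down.
Qed.

Lemma relheight_root m (gamma beta : coloring m.+1) :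
  relheight gamma beta (ord0, ord0) = 0.
Proof.
rewrite /relheight cpath_row filter_enum_ord_leq (@eq_filter _ _ pred0) //.
by rewrite filter_pred0 /pweight /= !big_nil subrr.
Qed.

Lemma relheight_even m (gamma beta : coloring m.+1) (v : gvert m.+1) :
  (2 %| relheight gamma beta v)%Z.
Proof.
have even_closed :
    closed (@cpath_step m.+1) [pred u | 2 %| relheight gamma beta u]%Z.
  move=> u w /(relheight_step_even gamma beta) even_step.
  by rewrite !inE; apply/idP/idP; lia.
have := closed_connect even_closed (connect_cpath_step v).
by rewrite !inE relheight_root => <-.
Qed.

Theorem lemma5p6 (n : nat) (hn : (1 <= n)%N) (gamma beta : coloring n)
  (hg : proper3 gamma) (hb : proper3 beta) (H : int) :
  let Y := sort (fun x y : int => x <= y)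
             [seq H + relheight gamma beta v | v <- enum {: gvert n}] in
  forall k : nat, (k.+1 < size Y)%N ->
    (nth 0 Y k.+1 - nth 0 Y k = 0) \/ (nth 0 Y k.+1 - nth 0 Y k = 2).
Proof.
case: n hn gamma beta hg hb => // m _ gamma beta _ _ Y k lt_k1Y.
set y := fun v => H + relheight gamma beta v.
set ys := [seq y v | v <- enum {: gvert m.+1}].
have Y_value i : (i < size Y)%N -> exists v, nth 0 Y i = y v.
  move=> lt_iY; have /mapP[v _ ->] : nth 0 Y i \in ys.
    by rewrite -(mem_sort <=%R) mem_nth.
  by exists v.
have [u Yk] := Y_value k (ltnW lt_k1Y); have [w Yk1] := Y_value k.+1 lt_k1Y.
have step_ge0 : nth 0 Y k <= nth 0 Y k.+1.
  by move/sortedP: (sort_sorted (@le_total _ int) ys); apply.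
have step_le2 : nth 0 Y k.+1 - nth 0 Y k <= 2.
  apply: (@sort_lipschitz_gap _ _ (@cpath_step m.+1) (ord0, ord0) y) => //.
    exact: connect_cpath_step.
  by move=> u' w' /(relheight_step_norm gamma beta); rewrite /y; lia.
have := relheight_even gamma beta u; have := relheight_even gamma beta w.
by move: step_ge0 step_le2; rewrite Yk Yk1 /y; lia.
Qed.
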